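(* Let $d\ge 2$, let $U$ be an arbitrary unitary on $\mathbb{C}^d$, and for $r\in[0,1]$ let $\mathcal{J}_r(\rho)=r\rho+(1-r)U\rho U^\dagger$. For any $r_1,r_2\in[0,1]$, a single-system probe is sufficient to distinguish $\mathcal{J}_{r_1}$ and $\mathcal{J}_{r_2}$ optimally: the maximum of the success probability over single-system probes equals its maximum over all probes, including entangled probes with an arbitrary ancilla.
   Context: Two channels $\mathcal{N}_1,\mathcal{N}_2$ on $\mathbb{C}^d$, chosen with equal priors $1/2$, are discriminated in a single shot. A single-system probe is a state $\rho$ on $\mathbb{C}^d$ with success probability $\frac12+\frac14\|\mathcal{N}_1(\rho)-\mathcal{N}_2(\rho)\|_1$; a general (possibly entangled) probe is a state $\rho_{AB}$ on $\mathbb{C}^d\otimes\mathbb{C}^{d'}$ (any finite $d'$) with the channel acting on $A$, with success probability $\frac12+\frac14\|(\mathcal{N}_1\otimes\mathrm{id})(\rho_{AB})-(\mathcal{N}_2\otimes\mathrm{id})(\rho_{AB})\|_1$; $\|\cdot\|_1$ is the trace norm. *)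

(* matrices over an abstract numClosedFieldType C
   (the field of complex numbers is an instance). *)
From HB Require Import structures.
From mathcomp Require Import all_boot all_order all_algebra.
From mathcomp Require Import sesquilinear spectral.
Set Implicit Arguments. Unset Strict Implicit. Unset Printing Implicit Defensive.
Import Order.TTheory GRing.Theory Num.Theory.
Local Open Scope ring_scope.
Local Open Scope sesquilinear_scope.

Section Defs.
Variable C : numClosedFieldType.

Definition adj m n (A : 'M[C]_(m, n)) : 'M[C]_(n, m) := A ^t*.

Definition is_state n (rho : 'M[C]_n) : Prop :=
  [/\ adj rho = rho,
      (forall v : 'rV[C]_n, 0 <= (v *m rho *m adj v) 0 0)
    & \tr rho = 1].

(* trace norm ||A||_1 = tr sqrt(A^dagger A) = sum of the square roots of the
   eigenvalues of the (normal, psd) matrix A^dagger A, i.e. sum of the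
   singular values of A. *)
Definition trnorm n (A : 'M[C]_n) : C :=
  \sum_(i < n) sqrtC (spectral_diag (adj A *m A) 0 i).

Definition Jch d (U : 'M[C]_d) (r : C) (X : 'M[C]_d) : 'M[C]_d :=
  r *: X + (1 - r) *: (U *m X *m adj U).

Lemma card_pair d d' : #|{: 'I_d * 'I_d'}| = (d * d')%N.
Proof. by rewrite card_prod !card_ord. Qed.

Definition enc d d' (i : 'I_d) (k : 'I_d') : 'I_(d * d') :=
  cast_ord (card_pair d d') (enum_rank (i, k)).
Definition dec d d' (a : 'I_(d * d')) : 'I_d * 'I_d' :=
  enum_val (cast_ord (esym (card_pair d d')) a).

(* (Phi (x) id)(X) for a map Phi on d x d matrices acting on system A,
   with ancilla B of dimension d': apply Phi to every d x d block
   X_{kl} = (<i,k| X |j,l>)_{i,j}. *)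
Definition tens_id d d' (Phi : 'M[C]_d -> 'M[C]_d) (X : 'M[C]_(d * d'))
  : 'M[C]_(d * d') :=
  \matrix_(a, b)
    Phi (\matrix_(i, j) X (enc i (dec a).2) (enc j (dec b).2)) (dec a).1 (dec b).1.

(* success probabilities for discriminating N1, N2 with equal priors *)
Definition psucc_single d (N1 N2 : 'M[C]_d -> 'M[C]_d) (rho : 'M[C]_d) : C :=
  2^-1 + 4^-1 * trnorm (N1 rho - N2 rho).

Definition psucc_ent d d' (N1 N2 : 'M[C]_d -> 'M[C]_d) (rho : 'M[C]_(d * d')) : C :=
  2^-1 + 4^-1 * trnorm (tens_id N1 rho - tens_id N2 rho).

End Defs.

From HB Require Import structures.
From mathcomp Require Import all_boot all_order all_algebra.
From mathcomp Require Import sesquilinear spectral.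
From mathcomp Require Import ring lra.
From Stdlib Require Import Classical.
Set Implicit Arguments. Unset Strict Implicit. Unset Printing Implicit Defensive.
Import Order.TTheory GRing.Theory Num.Theory.
Local Open Scope ring_scope.
Local Open Scope sesquilinear_scope.

(* The two channels differ by (r1 - r2) times rho - U rho U^t*, and with an
   ancilla the same holds with U replaced by the unitary U (x) 1; so every probe
   is judged by the trace norm of rho - V rho V^t* alone.  For a pure state psi
   this norm is 2 sqrt (1 - |<psi|V|psi>|^2), as psi^t* psi - phi^t* phi has
   eigenvalues +- sqrt (1 - |<psi|phi>|^2) besides 0.  For a mixed state,
   splitting it into pure states and testing against the projector on the
   positive part of rho - V rho V^t*, the norm is at most 2 sqrt (1 - mu)
   whenever mu <= |<psi|V|psi>|^2 for all unit psi.  Both <psi|U|psi> and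
   <Psi|U (x) 1|Psi> are convex combinations of the eigenvalues of U, so the
   optimal probe is the pure state whose expectation is the point of smallest
   modulus in their convex hull.  That point exists over any real field: by a
   support reduction it is the origin or lies on a segment between two
   eigenvalues, where it is an explicit clamped projection. *)

Section MinNormInPlanarHull.
Variables (R : realFieldType) (n : nat) (x y : 'I_n -> R).

Definition wsum (p f : 'I_n -> R) := \sum_i p i * f i.
Definition sqnorm (p : 'I_n -> R) := wsum p x ^+ 2 + wsum p y ^+ 2.
Definition in_simplex (p : 'I_n -> R) := (forall i, 0 <= p i) /\ \sum_i p i = 1.
Definition support (p : 'I_n -> R) := [set i | p i != 0].

Definition origin_in_hull := exists p, in_simplex p /\ sqnorm p = 0.
Definition support_reducible (p : 'I_n -> R) :=
  exists q, [/\ in_simplex q, (#|support q| < #|support p|)%N & sqnorm q <= sqnorm p].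

Lemma simplex_weight01 p i : in_simplex p -> 0 <= p i <= 1.
Proof.
move=> [p_ge0 p1]; rewrite p_ge0 -p1 (bigD1 i) //= lerDl.
by apply: sumr_ge0 => m _; exact: p_ge0.
Qed.

Lemma sqnorm_ge0 p : 0 <= sqnorm p.
Proof. by rewrite addr_ge0 ?sqr_ge0. Qed.

Lemma wsumD p q t f : wsum (fun m => p m + t * q m) f = wsum p f + t * wsum q f.
Proof.
rewrite /wsum mulr_sumr -big_split; apply: eq_bigr => m _ /=; ring.
Qed.

Lemma wsumN p f : wsum (fun m => - p m) f = - wsum p f.
Proof. by rewrite /wsum -sumrN; apply: eq_bigr => m _; rewrite mulNr. Qed.

Lemma sum_delta (i : 'I_n) (f : 'I_n -> R) : \sum_m (m == i)%:R * f m = f i.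
Proof.
by rewrite (bigD1 i) //= eqxx mul1r big1 ?addr0 // => m /negPf ->; rewrite mul0r.
Qed.

Lemma wsum1 p : wsum p (fun=> 1) = \sum_i p i.
Proof. by apply: eq_bigr => i _; rewrite mulr1. Qed.

(* Lagrange's identity for z := sum_m p_m (x_m, y_m) and w := sum_m q_m (x_m, y_m),
   whose cross product z /\ w vanishes. *)
Lemma sqnorm_parallel_shift p q t :
  wsum p x * wsum q y = wsum p y * wsum q x ->
  sqnorm p * sqnorm (fun m => p m + t * q m) =
  (sqnorm p + t * (wsum p x * wsum q x + wsum p y * wsum q y)) ^+ 2.
Proof.
rewrite /sqnorm !wsumD => par.
set X := wsum p x; set Y := wsum p y; set X' := wsum q x; set Y' := wsum q y.
transitivity ((X ^+ 2 + Y ^+ 2 + t * (X * X' + Y * Y')) ^+ 2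
               + t ^+ 2 * (X * Y' - Y * X') ^+ 2); first by ring.
by rewrite par subrr expr0n mulr0 addr0.
Qed.

Lemma exists_neg_of_sum0 (q : 'I_n -> R) k : \sum_i q i = 0 -> q k != 0 -> exists m, q m < 0.
Proof.
move=> q0 qk; case: (pickP (fun m => q m < 0)) => [m qm|nneg]; first by exists m.
have q_ge0 m : 0 <= q m by rewrite leNgt; apply/negbT/nneg.
by rewrite (psumr_eq0P (fun m _ => q_ge0 m) q0) ?eqxx in qk.
Qed.

Lemma max_feasible_step (p q : 'I_n -> R) m0 : (forall i, 0 <= p i) -> q m0 < 0 ->
  exists t m, [/\ 0 <= t, q m < 0, p m + t * q m = 0 & forall i, 0 <= p i + t * q i].
Proof.
move=> p_ge0 qm0.
have [m qm tmin] := @arg_minP _ _ _ m0 (fun m => q m < 0) (fun m => p m / - q m) qm0.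
have qm_neq0 : q m != 0 by rewrite lt_eqF.
exists (p m / - q m), m; split => //.
- by rewrite divr_ge0 // oppr_ge0 ltW.
- by rewrite invrN mulrN mulNr -mulrA mulVf // mulr1 subrr.
move=> i; case: (ltP (q i) 0) => qi; last first.
  by rewrite addr_ge0 // mulr_ge0 // divr_ge0 // oppr_ge0 ltW.
have := tmin i qi; rewrite ler_pdivlMr ?oppr_gt0 // mulrN; lra.
Qed.

Lemma support_shift_lt (p q : 'I_n -> R) t m :
  (forall i, q i != 0 -> p i != 0) -> p m != 0 -> p m + t * q m = 0 ->
  (#|support (fun i => p i + t * q i)%R| < #|support p|)%N.
Proof.
move=> supp_q pm pm0; rewrite (cardsD1 m (support p)) inE pm add1n ltnS.
apply/subset_leq_card/subsetP => i; rewrite !inE => pi_neq0; apply/andP; split.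
  by apply: contraNneq pi_neq0 => ->; rewrite pm0.
apply: contraNneq pi_neq0 => pi0.
have [qi0|/supp_q] := eqVneq (q i) 0; first by rewrite pi0 qi0 mulr0 addr0.
by rewrite pi0 eqxx.
Qed.

Lemma reducible_of_parallel_direction (p q : 'I_n -> R) k :
  in_simplex p -> \sum_i q i = 0 -> q k != 0 ->
  (forall m, q m != 0 -> p m != 0) ->
  wsum p x * wsum q y = wsum p y * wsum q x ->
  origin_in_hull \/ support_reducible p.
Proof.
move=> [p_ge0 p1] q0 qk supp_q par.
wlog rho_le0 : q q0 qk supp_q par / wsum p x * wsum q x + wsum p y * wsum q y <= 0.
  move=> descend.
  have [|rho_gt0] := leP (wsum p x * wsum q x + wsum p y * wsum q y) 0; first exact: descend.
  apply: (descend (fun m => - q m)); rewrite ?sumrN ?q0 ?oppr0 ?oppr_eq0 ?wsumN //.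
  - by move=> m; rewrite oppr_eq0; exact: supp_q.
  - by rewrite !mulrN par.
  - by rewrite !mulrN -opprD oppr_le0 ltW.
set rho := _ + _ in rho_le0.
have [Np0|Np_neq0] := eqVneq (sqnorm p) 0; first by left; exists p.
have Np_gt0 : 0 < sqnorm p by rewrite lt_def Np_neq0 sqnorm_ge0.
have shift_simplex t : (forall i, 0 <= p i + t * q i) -> in_simplex (fun i => p i + t * q i).
  by move=> ge0; split => //; rewrite big_split /= -mulr_sumr q0 mulr0 addr0.
have [m0 qm0] := exists_neg_of_sum0 q0 qk.
have [t [m [t_ge0 qm pm0 feas]]] := max_feasible_step p_ge0 qm0.
(* Along p + t q the combination moves towards the origin on a fixed line,
   until a weight vanishes or the origin is reached. *)
have line := sqnorm_parallel_shift _ par; rewrite -/rho in line.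
have [rho_t_ge0|rho_t_lt0] := leP 0 (sqnorm p + t * rho).
  right; exists (fun i => p i + t * q i); split; first exact: shift_simplex.
    by apply: support_shift_lt pm0; rewrite ?supp_q ?lt_eqF.
  have := line t; have : t * rho <= 0 by rewrite mulr_ge0_le0.
  nra.
left; have rho_lt0 : rho < 0 by nra.
set s := - sqnorm p / rho.
have s_le_t : s <= t by rewrite /s ler_ndivrMr //; lra.
exists (fun i => p i + s * q i); split.
  have s_ge0 : 0 <= s by rewrite /s mulr_le0 // ?oppr_le0 ?invr_le0 ltW.
  apply: shift_simplex => i; have := feas i; have := p_ge0 i.
  case: (leP 0 (q i)); nra.
have := line s; rewrite /s mulrAC -mulrA mulfV ?lt_eqF // mulr1 subrr expr0n /=.
by move/eqP; rewrite mulf_eq0 (negPf Np_neq0) => /eqP.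
Qed.

Lemma exists_kernel3 (b : 'I_n -> R) i j l : i != j -> i != l -> j != l ->
  exists q : 'I_n -> R, [/\ \sum_m q m = 0, wsum q b = 0, exists k, q k != 0
    & forall m, q m != 0 -> m \in [:: i; j; l]].
Proof.
move=> ij il jl.
pose q3 (a a' a'' : R) (m : 'I_n) := a * (m == i)%:R + a' * (m == j)%:R + a'' * (m == l)%:R.
have wsum_q3 a a' a'' f : wsum (q3 a a' a'') f = a * f i + a' * f j + a'' * f l.
  rewrite /wsum; under eq_bigr => m _ do rewrite !mulrDl -!mulrA.
  by rewrite !big_split -!mulr_sumr !sum_delta.
have [a [a' [a'' [sum0 b0 nz]]]] : exists a a' a'',
    [/\ a + a' + a'' = 0, a * b i + a' * b j + a'' * b l = 0 & (a != 0) || (a' != 0)].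
  have [/eqP|ne] := eqVneq (b l - b j, b i - b l) (0, 0).
    rewrite xpair_eqE !subr_eq0 => /andP[/eqP blj /eqP bil].
    by exists 1, (-1), 0; rewrite oner_eq0 bil blj; split => //; ring.
  exists (b l - b j), (b i - b l), (b j - b i); split; try ring.
  by rewrite -negb_and -xpair_eqE.
exists (q3 a a' a''); split.
- by rewrite -wsum1 wsum_q3 !mulr1.
- by rewrite wsum_q3.
- case/orP: nz => nz; [exists i | exists j]; rewrite /q3 eqxx.
    by rewrite (negPf ij) (negPf il) !mulr0 !addr0 mulr1.
  by rewrite (eq_sym j) (negPf ij) (negPf jl) !mulr0 add0r addr0 mulr1.
move=> m; rewrite /q3 !inE.
by case: (m == i); case: (m == j); case: (m == l); rewrite ?orbT // !mulr0 !addr0 eqxx.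
Qed.

Lemma support_ge3_reducible p : in_simplex p -> (2 < #|support p|)%N ->
  origin_in_hull \/ support_reducible p.
Proof.
move=> sp /card_gt2P[i [j [l [[ip jp lp] [ij jl li]]]]].
rewrite !inE in ip jp lp; have il : i != l by rewrite eq_sym.
pose b m := wsum p x * y m - wsum p y * x m.
have [q [q0 qb0 [k qk] supp_q]] := exists_kernel3 b ij il jl.
apply: (reducible_of_parallel_direction sp q0 qk) => [m /supp_q|].
  by rewrite !inE => /or3P[] /eqP ->.
apply/eqP; rewrite -subr_eq0 -qb0 /wsum /b !mulr_sumr -sumrB; apply/eqP.
by apply: eq_bigr => m _ /=; rewrite /wsum; ring.
Qed.

Lemma reduce_support p : in_simplex p -> origin_in_hull \/
  exists q, [/\ in_simplex q, (#|support q| <= 2)%N & sqnorm q <= sqnorm p].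
Proof.
have [k] := ubnP #|support p|; elim: k p => // k IH p.
rewrite ltnS => supp_le sp.
have [le2|gt2] := leqP #|support p| 2; first by right; exists p.
have [|[p' [sp' lt_supp le_p']]] := support_ge3_reducible sp gt2; first by left.
have [|[q [sq q2 le_q]]] := IH p' (leq_trans lt_supp supp_le) sp'; first by left.
by right; exists q; split => //; apply: le_trans le_p'.
Qed.

Definition seg_sqnorm i j (s : R) :=
  (s * x i + (1 - s) * x j) ^+ 2 + (s * y i + (1 - s) * y j) ^+ 2.

(* The projection of the origin on the line through (x_j, y_j) and (x_i, y_i),
   as the parameter s of s (x_i, y_i) + (1 - s) (x_j, y_j), clamped to [0, 1]. *)
Definition seg_argmin i j : R :=
  let W := (x i - x j) ^+ 2 + (y i - y j) ^+ 2 in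
  let s := - (x j * (x i - x j) + y j * (y i - y j)) / W in
  if W == 0 then 0 else if s < 0 then 0 else if 1 < s then 1 else s.

Lemma seg_argmin_in01 i j : 0 <= seg_argmin i j <= 1.
Proof.
rewrite /seg_argmin; case: ifP => _; first by rewrite lexx ler01.
case: ifP => [_|/negbT]; first by rewrite lexx ler01.
by case: ifP => [_|/negbT]; rewrite ?lexx ?ler01 // -!leNgt => -> ->.
Qed.

Lemma seg_argmin_min i j (s : R) : 0 <= s <= 1 ->
  seg_sqnorm i j (seg_argmin i j) <= seg_sqnorm i j s.
Proof.
move=> /andP[s_ge0 s_le1].
set W := (x i - x j) ^+ 2 + (y i - y j) ^+ 2.
set B := x j * (x i - x j) + y j * (y i - y j).
have seg_sub u v : seg_sqnorm i j v - seg_sqnorm i j u = (v - u) * (2 * B + (v + u) * W).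
  by rewrite /seg_sqnorm /B /W; ring.
rewrite -subr_ge0 seg_sub /seg_argmin -/W -/B.
have [W0|W_neq0] := eqVneq W 0.
  have /andP[] : ((x i - x j) ^+ 2 == 0) && ((y i - y j) ^+ 2 == 0).
    by rewrite -paddr_eq0 ?sqr_ge0 // -/W W0.
  rewrite !sqrf_eq0 => /eqP dx0 /eqP dy0.
  by rewrite W0 /B dx0 dy0 !(mulr0, addr0).
have W_gt0 : 0 < W by rewrite lt_def W_neq0 addr_ge0 ?sqr_ge0.
set u := - B / W; have -> : B = - (u * W) by rewrite /u mulfVK // opprK.
case: ifP => [u_lt0|_].
  have -> : (s - 0) * (2 * - (u * W) + (s + 0) * W) = W * (s * (s - 2 * u)) by ring.
  by apply: mulr_ge0; [exact: ltW | apply: mulr_ge0 => //; lra].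
case: ifP => [u_gt1|_].
  have -> : (s - 1) * (2 * - (u * W) + (s + 1) * W) = W * ((1 - s) * (2 * u - s - 1)).
    by ring.
  by apply: mulr_ge0; [exact: ltW | apply: mulr_ge0 => //; lra].
have -> : (s - u) * (2 * - (u * W) + (s + u) * W) = W * (s - u) ^+ 2 by ring.
by apply: mulr_ge0; [exact: ltW | exact: sqr_ge0].
Qed.

Definition seg_weights i j (s : R) : 'I_n -> R :=
  fun m => s * (m == i)%:R + (1 - s) * (m == j)%:R.

Lemma wsum_seg_weights i j s f : wsum (seg_weights i j s) f = s * f i + (1 - s) * f j.
Proof.
rewrite /wsum; under eq_bigr => m _ do rewrite mulrDl -!mulrA.
by rewrite big_split -!mulr_sumr !sum_delta.
Qed.

Lemma seg_weights_simplex i j s : 0 <= s <= 1 -> in_simplex (seg_weights i j s).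
Proof.
move=> /andP[s_ge0 s_le1]; split=> [m|].
  by rewrite addr_ge0 // mulr_ge0 ?ler0n // subr_ge0.
by rewrite -wsum1 wsum_seg_weights !mulr1 subrKC.
Qed.

Lemma sqnorm_seg_weights i j s : sqnorm (seg_weights i j s) = seg_sqnorm i j s.
Proof. by rewrite /sqnorm !wsum_seg_weights. Qed.

Lemma wsum_on_pair p i j f : in_simplex p -> support p \subset [set i; j] ->
  wsum p f = p i * f i + (1 - p i) * f j.
Proof.
move=> [_ p1] /subsetP supp_ij.
have sum_on_pair (g : 'I_n -> R) : (forall m, p m = 0 -> g m = 0) ->
    \sum_m g m = \sum_(m in [set i; j]) g m.
  move=> g0; rewrite [RHS]big_mkcond; apply: eq_bigr => m _; case: ifP => // m_ij.
  by apply: g0; apply/eqP; apply: contraFT m_ij => pm; apply: supp_ij; rewrite inE.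
move: p1; rewrite /wsum !sum_on_pair => [|m ->|m ->]; rewrite ?mul0r //.
have [<-|ij] := eqVneq i j; first by rewrite setUid !big_set1 => ->; rewrite subrr mul0r addr0.
by rewrite !big_setU1 ?inE //= !big_set1 => <-; congr (_ + _ * _); ring.
Qed.

Lemma subset_pair_of_card_le2 (T : finType) (A : {set T}) (t : T) :
  (#|A| <= 2)%N -> exists i j, A \subset [set i; j].
Proof.
move=> A_le2; have [->|[i iA]] := set_0Vmem A; first by exists t, t; rewrite sub0set.
have [Ai0|[j]] := set_0Vmem (A :\ i).
  exists i, i; apply/subsetP => m mA; rewrite setUid inE; apply/negPn/negP => mi.
  by have := in_set0 m; rewrite -Ai0 !inE mi mA.
rewrite !inE => /andP[ji jA]; exists i, j; apply/subsetP => m mA.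
rewrite !inE; apply/negPn/negP; rewrite negb_or => /andP[mi mj].
suff : (2 < #|A|)%N by rewrite ltnNge A_le2.
by apply/card_gt2P; exists i, j, m; split; split; rewrite // eq_sym.
Qed.

Theorem exists_min_sqnorm : (0 < n)%N ->
  exists p, in_simplex p /\ forall q, in_simplex q -> sqnorm p <= sqnorm q.
Proof.
move=> n_gt0; have [[p [sp p0]]|no0] := classic origin_in_hull.
  by exists p; split => // q _; rewrite p0 sqnorm_ge0.
pose i0 := Ordinal n_gt0.
pose seg_min (ij : 'I_n * 'I_n) := seg_sqnorm ij.1 ij.2 (seg_argmin ij.1 ij.2).
have [[i j] _ ij_min] := @arg_minP _ _ _ (i0, i0) xpredT seg_min isT.
exists (seg_weights i j (seg_argmin i j)); split.
  exact/seg_weights_simplex/seg_argmin_in01.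
move=> q sq; have [//|[q' [sq' q'2 le_q']]] := reduce_support sq.
have [k [l kl]] := subset_pair_of_card_le2 i0 q'2.
apply: le_trans le_q'; rewrite sqnorm_seg_weights.
apply: le_trans (ij_min (k, l) isT) _; rewrite /seg_min /=.
apply: le_trans (seg_argmin_min k l (simplex_weight01 k sq')) _.
by rewrite /sqnorm !(wsum_on_pair _ sq' kl).
Qed.

End MinNormInPlanarHull.

Section RealSubfield.
Variable C : numClosedFieldType.

Definition realC := {x : C | x \is Num.real}.
HB.instance Definition _ := [isSub for (@sval C _) : realC -> C].
HB.instance Definition _ := [Choice of realC by <:].
HB.instance Definition _ := [SubChoice_isSubIntegralDomain of realC by <:].
HB.instance Definition _ := [SubIntegralDomain_isSubField of realC by <:].

Let le (x y : realC) := val x <= val y.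
Let lt (x y : realC) := val x < val y.
Let norm (x : realC) : realC := Sub `|val x| (normr_real _).

Fact realC_le0_add x y : le 0 x -> le 0 y -> le 0 (x + y). Proof. exact: addr_ge0. Qed.
Fact realC_le0_mul x y : le 0 x -> le 0 y -> le 0 (x * y). Proof. exact: mulr_ge0. Qed.
Fact realC_le0_anti x : le 0 x -> le x 0 -> x = 0.
Proof. by move=> x_ge0 x_le0; apply/val_inj/eqP; rewrite eq_le; apply/andP. Qed.
Fact realC_sub_ge0 x y : le 0 (y - x) = le x y. Proof. exact: subr_ge0. Qed.
Fact realC_le0_total x : le 0 x || le x 0. Proof. by case: x. Qed.
Fact realC_normN x : norm (- x) = norm x. Proof. by apply: val_inj; rewrite /= normrN. Qed.
Fact realC_ge0_norm x : le 0 x -> norm x = x.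
Proof. by move=> x_ge0; apply: val_inj; rewrite /= ger0_norm. Qed.
Fact realC_lt_def x y : lt x y = (y != x) && le x y. Proof. exact: lt_def. Qed.

HB.instance Definition _ := Num.IntegralDomain_isLeReal.Build realC
  realC_le0_add realC_le0_mul realC_le0_anti realC_sub_ge0 realC_le0_total
  realC_normN realC_ge0_norm realC_lt_def.

Definition realC_Re (z : C) : realC := Sub ('Re z) (Creal_Re z).
Definition realC_Im (z : C) : realC := Sub ('Im z) (Creal_Im z).

Lemma normC2_wsum n (lam : 'I_n -> C) (p : 'I_n -> realC) :
  `|\sum_i val (p i) * lam i| ^+ 2 =
  val (sqnorm (realC_Re \o lam) (realC_Im \o lam) p).
Proof.
rewrite normC2_Re_Im /sqnorm /wsum rmorphD !rmorphXn !rmorph_sum !raddf_sum.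
by congr (_ ^+ 2 + _ ^+ 2); apply: eq_bigr => i _ /=; rewrite (ReMl, ImMl) // (valP (p i)).
Qed.

Lemma exists_min_norm_convex_comb n (lam : 'I_n -> C) : (0 < n)%N ->
  exists p : 'I_n -> C, [/\ forall i, 0 <= p i, \sum_i p i = 1 &
    forall q : 'I_n -> C, (forall i, 0 <= q i) -> \sum_i q i = 1 ->
      `|\sum_i p i * lam i| ^+ 2 <= `|\sum_i q i * lam i| ^+ 2].
Proof.
move=> n_gt0.
have [p [[p_ge0 p1] p_min]] := exists_min_sqnorm (realC_Re \o lam) (realC_Im \o lam) n_gt0.
exists (fun i => val (p i)); split => [i|| q q_ge0 q1]; first exact: p_ge0.
  by rewrite -rmorph_sum p1 rmorph1.
pose qR i : realC := Sub (q i) (ger0_real (q_ge0 i)).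
rewrite normC2_wsum (normC2_wsum lam qR); apply: p_min; split => [i|]; first exact: q_ge0.
by apply: val_inj; rewrite rmorph_sum rmorph1.
Qed.

End RealSubfield.

Section TraceNorm.
Variable C : numClosedFieldType.

Lemma trmxC_mul m n p (A : 'M[C]_(m, n)) (B : 'M[C]_(n, p)) : (A *m B)^t* = B^t* *m A^t*.
Proof. by rewrite trmx_mul map_mxM. Qed.

Lemma trmxCB m n (A B : 'M[C]_(m, n)) : (A - B)^t* = A^t* - B^t*.
Proof. by apply/matrixP => i j; rewrite !mxE rmorphB. Qed.

Lemma hermitian_normal n (A : 'M[C]_n) : A^t* = A -> A \is normalmx.
Proof. by move=> Ah; apply/normalmxP; rewrite Ah. Qed.

Lemma gram_normal m n (X : 'M[C]_(m, n)) : X^t* *m X \is normalmx.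
Proof. by apply/normalmxP; rewrite trmxC_mul trmxCK. Qed.

Lemma trmxC_diag n (a : 'rV[C]_n) : (diag_mx a)^t* = diag_mx (\row_i (a 0 i)^*).
Proof. by rewrite tr_diag_mx map_diag_mx; congr diag_mx; apply/rowP => i; rewrite !mxE. Qed.

Lemma trmxC_conj n (W A : 'M[C]_n) : (W^t* *m A *m W)^t* = W^t* *m A^t* *m W.
Proof. by rewrite !trmxC_mul trmxCK mulmxA. Qed.

Lemma mulmx_conj_unitary n (W A B : 'M[C]_n) : W \is unitarymx ->
  (W^t* *m A *m W) *m (W^t* *m B *m W) = W^t* *m (A *m B) *m W.
Proof. by move=> Wu; rewrite !mulmxA mulmxtVK. Qed.

Lemma unitary_trmxC_mul n (V : 'M[C]_n) : V \is unitarymx -> V^t* *m V = 1%:M.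
Proof. by move=> Vu; rewrite -[V^t*]mul1mx mulmxKtV. Qed.

Lemma hermitian_sub_conj n (V A : 'M[C]_n) : A^t* = A ->
  (A - V *m A *m V^t*)^t* = A - V *m A *m V^t*.
Proof. by move=> Ah; rewrite trmxCB !trmxC_mul trmxCK Ah mulmxA. Qed.

Lemma conj_unitaryK n (W X : 'M[C]_n) : W \is unitarymx -> W *m (W^t* *m X *m W) *m W^t* = X.
Proof. by move=> Wu; rewrite !mulmxA (unitarymxP Wu) mul1mx mulmxtVK. Qed.

Lemma mxtrace_conj_unitary n (W A : 'M[C]_n) : W \is unitarymx ->
  \tr (W^t* *m A *m W) = \tr A.
Proof. by move=> Wu; rewrite mxtrace_mulC mulmxA (unitarymxP Wu) mul1mx. Qed.

Lemma spectral_decomposition n (A : 'M[C]_n) : A \is normalmx ->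
  A = (spectralmx A)^t* *m diag_mx (spectral_diag A) *m spectralmx A.
Proof. by rewrite -invmx_unitary ?spectral_unitarymx // => /orthomx_spectralP. Qed.

Lemma char_poly_similar n (P A : 'M[C]_n) : P \in unitmx ->
  char_poly (invmx P *m A *m P) = char_poly A.
Proof.
move=> Pu; rewrite /char_poly /char_poly_mx !map_mxM.
set iP := map_mx polyC (invmx P); set P' := map_mx polyC P; set A' := map_mx polyC A.
have iPP : iP *m P' = 1%:M by rewrite -map_mxM mulVmx // map_mx1.
have PiP : P' *m iP = 1%:M by rewrite -map_mxM mulmxV // map_mx1.
have -> : 'X%:M - iP *m A' *m P' = iP *m ('X%:M - A') *m P'.
  by rewrite mulmxBr mulmxBl mul_mx_scalar -scalemxAl iPP scalemx1.
by rewrite !det_mulmx mulrC mulrA -det_mulmx PiP det1 mul1r.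
Qed.

Lemma char_poly_diag n (a : 'rV[C]_n) :
  char_poly (diag_mx a) = \prod_(x <- [seq a 0 i | i <- enum 'I_n]) ('X - x%:P).
Proof.
rewrite char_poly_trig ?diag_mx_is_trig // big_map big_enum /=.
by apply: eq_bigr => i _; rewrite mxE eqxx mulr1n.
Qed.

(* Similar diagonal matrices have the same diagonal up to a permutation,
   because they have the same characteristic polynomial. *)
Lemma sum_spectral_diag n (A P : 'M[C]_n) (a : 'rV[C]_n) (f : C -> C) :
  A \is normalmx -> P \in unitmx -> A = invmx P *m diag_mx a *m P ->
  \sum_i f (spectral_diag A 0 i) = \sum_i f (a 0 i).
Proof.
move=> An Pu eA.
have : perm_eq [seq spectral_diag A 0 i | i <- enum 'I_n] [seq a 0 i | i <- enum 'I_n].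
  apply: prod_XsubC_eq; rewrite -!char_poly_diag.
  rewrite -(char_poly_similar _ (spectral_unit A)) -(orthomx_spectralP An).
  by rewrite eA char_poly_similar.
move/(perm_big _ (op := +%R) (x := 0) (F := f) (P := xpredT)).
by rewrite !big_map -!enumT !big_enum.
Qed.

Lemma trnorm_unitary_diag n (W : 'M[C]_n) (a : 'rV[C]_n) : W \is unitarymx ->
  trnorm (W^t* *m diag_mx a *m W) = \sum_i `|a 0 i|.
Proof.
move=> Wu; set X := W^t* *m _ *m W.
have XX : adj X *m X = invmx W *m diag_mx (\row_i `|a 0 i| ^+ 2) *m W.
  rewrite /adj trmxC_conj trmxC_diag mulmx_conj_unitary // mulmx_diag invmx_unitary //.
  by congr (_ *m diag_mx _ *m _); apply/rowP => i; rewrite !mxE normCKC.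
rewrite /trnorm (sum_spectral_diag _ (gram_normal X) (unitarymx_unit Wu) XX).
by apply: eq_bigr => i _; rewrite mxE sqrCK.
Qed.

Lemma trnormZ_normal n (c : C) (A : 'M[C]_n) : A \is normalmx ->
  trnorm (c *: A) = `|c| * trnorm A.
Proof.
move=> /spectral_decomposition ->; set W := spectralmx A; set a := spectral_diag A.
have Wu : W \is unitarymx := spectral_unitarymx A.
rewrite scalemxAl scalemxAr.
have -> : c *: diag_mx a = diag_mx (c *: a) by apply/matrixP => i j; rewrite !mxE mulrnAr.
rewrite !trnorm_unitary_diag // mulr_sumr.
by apply: eq_bigr => i _; rewrite mxE normrM.
Qed.

Lemma hermitian_decomposition n (Y : 'M[C]_n) : Y^t* = Y ->
  exists (W : 'M[C]_n) (y : 'rV[C]_n),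
    [/\ W \is unitarymx, forall i, y 0 i \is Num.real & Y = W^t* *m diag_mx y *m W].
Proof.
move=> Yh; have Yherm : Y \is hermsymmx by apply/is_hermitianmxP; rewrite expr0 scale1r Yh.
exists (spectralmx Y), (spectral_diag Y); split; first exact: spectral_unitarymx.
  by move=> i; have /mxOverP := hermitian_spectral_diag_real Yherm; apply.
exact/spectral_decomposition/hermitian_normalmx.
Qed.

Lemma unitary_normal n (U : 'M[C]_n) : U \is unitarymx -> U \is normalmx.
Proof. by move=> Uu; apply/normalmxP; rewrite (unitarymxP Uu) unitary_trmxC_mul. Qed.

End TraceNorm.

Section InnerProduct.
Variable C : numClosedFieldType.

Definition outer n (u v : 'rV[C]_n) : 'M[C]_n := u^t* *m v.

Lemma outer_mul n (u v w z : 'rV[C]_n) : outer u v *m outer w z = dotmx v w *: outer u z.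
Proof.
rewrite /outer mulmxA -[u^t* *m v *m w^t*]mulmxA [v *m w^t*]mx11_scalar dotmxE.
by rewrite mul_mx_scalar -scalemxAl.
Qed.

Lemma mxtrace_outer n (u v : 'rV[C]_n) : \tr (outer u v) = dotmx v u.
Proof. by rewrite /outer mxtrace_mulC trace_mx11 dotmxE. Qed.

Lemma outer_conj n (U : 'M[C]_n) (u v : 'rV[C]_n) :
  U *m outer u v *m U^t* = outer (u *m U^t*) (v *m U^t*).
Proof. by rewrite /outer trmxC_mul trmxCK !mulmxA. Qed.

Lemma dotmx_conj n (u v : 'rV[C]_n) : dotmx u v = (dotmx v u)^*.
Proof.
rewrite !dotmxE !mxE rmorph_sum; apply: eq_bigr => k _.
by rewrite !mxE rmorphM /= conjCK mulrC.
Qed.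

Lemma dotmx_trmxC n (A : 'M[C]_n) (u v : 'rV[C]_n) : dotmx u (v *m A^t*) = dotmx (u *m A) v.
Proof. by rewrite !dotmxE trmxC_mul trmxCK mulmxA. Qed.

Lemma dotmx_mulmx_unitary n (W : 'M[C]_n) (u v : 'rV[C]_n) : W \is unitarymx ->
  dotmx (u *m W) (v *m W) = dotmx u v.
Proof. by move=> Wu; rewrite !dotmxE trmxC_mul mulmxA mulmxtVK. Qed.

Lemma dotmx_conj_entry m n (A : 'M[C]_(m, n)) (M : 'M[C]_n) i j :
  (A *m M *m A^t*) i j = dotmx (row i A *m M) (row j A).
Proof. by rewrite dotmxE -row_mul !mxE; apply: eq_bigr => k _; rewrite !mxE. Qed.

Lemma dotmx_self n (u : 'rV[C]_n) : dotmx u u = \sum_i `|u 0 i| ^+ 2.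
Proof. by rewrite dotmxE !mxE; apply: eq_bigr => i _; rewrite !mxE normCK. Qed.

Lemma dotmx_ge0 n (u : 'rV[C]_n) : 0 <= dotmx u u.
Proof. exact: (dnorm_ge0 (@dotmx C n) u). Qed.

Lemma dotmx_CauchySchwarz n (u v : 'rV[C]_n) :
  `|dotmx u v| <= sqrtC (dotmx u u) * sqrtC (dotmx v v).
Proof. by case: (CauchySchwarz_sqrt (@dotmx C n) u v). Qed.

Lemma dotmx_unit_le1 n (u v : 'rV[C]_n) : dotmx u u = 1 -> dotmx v v = 1 ->
  `|dotmx u v| ^+ 2 <= 1.
Proof.
move=> u1 v1; have := dotmx_CauchySchwarz u v; rewrite u1 v1 sqrtC1 mulr1 => le1.
by rewrite -(expr1n _ 2) ler_pXn2r ?nnegrE.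
Qed.

Lemma outer_state n (psi : 'rV[C]_n) : dotmx psi psi = 1 -> is_state (outer psi psi).
Proof.
move=> psi1; split; last by rewrite mxtrace_outer.
  by rewrite /adj /outer trmxC_mul trmxCK.
move=> v; have -> : v *m outer psi psi *m adj v = (v *m psi^t*) *m (v *m psi^t*)^t*.
  by rewrite /adj /outer trmxC_mul trmxCK !mulmxA.
by rewrite -dotmxE dotmx_ge0.
Qed.

Lemma dotmx_unitary_diag n (W : 'M[C]_n) (lam psi : 'rV[C]_n) :
  dotmx (psi *m (W^t* *m diag_mx lam *m W)) psi = \sum_i `|(psi *m W^t*) 0 i| ^+ 2 * lam 0 i.
Proof.
rewrite dotmxE; set c := psi *m W^t*.
have -> : psi *m (W^t* *m diag_mx lam *m W) *m psi^t* = c *m diag_mx lam *m c^t*.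
  by rewrite /c trmxC_mul trmxCK !mulmxA.
by rewrite mul_mx_diag !mxE; apply: eq_bigr => i _; rewrite !mxE normCK; ring.
Qed.

(* For normal A, <psi|A|psi> is a convex combination of the eigenvalues of A,
   and every convex combination is attained. *)
Lemma exists_min_numerical_range n (A : 'M[C]_n) : (0 < n)%N -> A \is normalmx ->
  exists psi0 : 'rV[C]_n, dotmx psi0 psi0 = 1 /\
    forall (K : finType) (psi : K -> 'rV[C]_n), \sum_k dotmx (psi k) (psi k) = 1 ->
      `|dotmx (psi0 *m A) psi0| ^+ 2 <= `|\sum_k dotmx (psi k *m A) (psi k)| ^+ 2.
Proof.
move=> n_gt0 /spectral_decomposition ->.
set W := spectralmx A; set lam := spectral_diag A.
have Wu : W \is unitarymx := spectral_unitarymx A.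
have [p [p_ge0 p1 p_min]] := exists_min_norm_convex_comb (fun i => lam 0 i) n_gt0.
pose c := \row_i sqrtC (p i).
have c2 i : `|c 0 i| ^+ 2 = p i by rewrite mxE ger0_norm ?sqrtC_ge0 // sqrtCK.
exists (c *m W); split.
  by rewrite dotmx_mulmx_unitary // dotmx_self (eq_bigr _ (fun i _ => c2 i)).
move=> K psi psi1; rewrite dotmx_unitary_diag mulmxtVK //.
under eq_bigr => i _ do rewrite c2.
under [X in _ <= `|X| ^+ 2]eq_bigr => k _ do rewrite dotmx_unitary_diag.
rewrite exchange_big /=; under [X in _ <= `|X| ^+ 2]eq_bigr => i _ do rewrite -mulr_suml.
apply: p_min => [i|]; first by apply: sumr_ge0 => k _; exact: exprn_ge0.
rewrite exchange_big /= -psi1; apply: eq_bigr => k _.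
by rewrite -dotmx_self dotmx_mulmx_unitary // trmxC_unitary.
Qed.

End InnerProduct.

Section Distinguishability.
Variable C : numClosedFieldType.

Lemma state_ensemble n (rho : 'M[C]_n) : is_state rho ->
  exists (R : 'M[C]_n) (p : 'rV[C]_n),
    [/\ R \is unitarymx, forall i, 0 <= p 0 i, \sum_i p 0 i = 1 &
      forall M, \tr (rho *m M) = \sum_i p 0 i * dotmx (row i R *m M) (row i R)].
Proof.
move=> [rho_h rho_psd rho_tr]; have [R [p [Ru _ erho]]] := hermitian_decomposition rho_h.
have tr_rhoM M : \tr (rho *m M) = \sum_i p 0 i * dotmx (row i R *m M) (row i R).
  rewrite erho -!mulmxA mxtrace_mulC -!mulmxA mul_diag_mx; apply: eq_bigr => i _.
  by rewrite mxE mulmxA dotmx_conj_entry.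
have R_rows i : dotmx (row i R) (row i R) = 1 by rewrite (row_unitarymxP Ru) eqxx.
exists R, p; split => // [i|].
  have := rho_psd (row i R); rewrite /adj -dotmxE -dotmx_conj_entry erho conj_unitaryK //.
  by rewrite mxE eqxx mulr1n.
by rewrite -rho_tr -[rho]mulmx1 tr_rhoM; apply: eq_bigr => i _; rewrite mulmx1 R_rows mulr1.
Qed.

Lemma trnorm_traceless_hermitian n (Y : 'M[C]_n) : Y^t* = Y -> \tr Y = 0 ->
  exists P : 'M[C]_n, [/\ P^t* = P, P *m P = P & trnorm Y = 2 * \tr (Y *m P)].
Proof.
move=> /hermitian_decomposition[W [y [Wu y_real ->]]].
rewrite mxtrace_conj_unitary // mxtrace_diag => y_sum0.
pose b := \row_i (if 0 < y 0 i then 1 else 0 : C).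
exists (W^t* *m diag_mx b *m W); split.
- rewrite trmxC_conj trmxC_diag; congr (_ *m diag_mx _ *m _).
  by apply/rowP => i; rewrite !mxE; case: ifP; rewrite ?rmorph1 ?rmorph0.
- rewrite mulmx_conj_unitary // mulmx_diag; congr (_ *m diag_mx _ *m _).
  by apply/rowP => i; rewrite !mxE; case: ifP; rewrite ?mulr1 ?mulr0.
rewrite trnorm_unitary_diag // mulmx_conj_unitary // mxtrace_conj_unitary //.
rewrite mulmx_diag mxtrace_diag.
transitivity (\sum_i (2 * (y 0 i * b 0 i) - y 0 i)); last first.
  by rewrite sumrB y_sum0 subr0 mulr_sumr; apply: eq_bigr => i _; rewrite !mxE.
apply: eq_bigr => i _; rewrite !mxE.
case: ifP => [y_gt0|/negbT y_le0].
  by rewrite gtr0_norm // mulr1 mulr2n mulrDl mul1r addrK.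
rewrite ler0_norm ?mulr0 ?sub0r //.
by move: y_le0; rewrite (real_ltNge (real0 _) (y_real i)) negbK.
Qed.

Lemma sqr_gap_le (a a' b b' : C) :
  a \is Num.real -> a' \is Num.real -> b \is Num.real -> b' \is Num.real ->
  a ^+ 2 + a' ^+ 2 = 1 -> b ^+ 2 + b' ^+ 2 = 1 ->
  (a ^+ 2 - b ^+ 2) ^+ 2 <= 1 - (a * b + a' * b') ^+ 2.
Proof.
move=> ar a'r br b'r a1 b1.
have one : (a ^+ 2 + a' ^+ 2) * (b ^+ 2 + b' ^+ 2) = 1 by rewrite a1 b1 mulr1.
(* Lagrange's identity for (a, a') and (b, b'), and for (a, a') and (b', b). *)
have -> : 1 - (a * b + a' * b') ^+ 2 = (a * b' - a' * b) ^+ 2 by rewrite -one; ring.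
have -> : a ^+ 2 - b ^+ 2 = (a * b' - a' * b) * (a * b' + a' * b).
  transitivity (a ^+ 2 * (b ^+ 2 + b' ^+ 2) - b ^+ 2 * (a ^+ 2 + a' ^+ 2)); last by ring.
  by rewrite a1 b1 !mulr1.
rewrite exprMn; apply: ler_piMr; first by rewrite real_exprn_even_ge0 // rpredB ?rpredM.
rewrite -one -subr_ge0 (_ : _ - _ = (a * b - a' * b') ^+ 2); last by ring.
by rewrite real_exprn_even_ge0 // rpredB ?rpredM.
Qed.

Lemma gap_le_sqrt_infidelity (s t al : C) :
  0 <= s <= 1 -> 0 <= t <= 1 -> 0 <= al ->
  al <= sqrtC s * sqrtC t + sqrtC (1 - s) * sqrtC (1 - t) ->
  s - t <= sqrtC (1 - al ^+ 2).
Proof.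
move=> /andP[s_ge0 s_le1] /andP[t_ge0 t_le1] al_ge0 al_le.
have sqrt_real z : 0 <= z -> sqrtC z \is Num.real.
  by move=> z_ge0; rewrite ger0_real // sqrtC_ge0.
have gap2 : (s - t) ^+ 2 <= 1 - al ^+ 2.
  have := @sqr_gap_le (sqrtC s) (sqrtC (1 - s)) (sqrtC t) (sqrtC (1 - t)).
  rewrite !sqrt_real ?subr_ge0 // !sqrtCK !subrKC => /(_ isT isT isT isT erefl erefl).
  move/le_trans; apply; rewrite lerD2l lerN2 ler_pXn2r ?nnegrE //.
  exact: le_trans al_le.
have st_real : s - t \is Num.real by rewrite rpredB // ger0_real.
have infid_ge0 : 0 <= 1 - al ^+ 2 by apply: le_trans gap2; rewrite real_exprn_even_ge0.
have [st_le0|st_gt0] := real_leP st_real (real0 C).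
  by apply: le_trans st_le0 _; rewrite sqrtC_ge0.
by rewrite -(sqrCK (ltW st_gt0)) ler_sqrtC // nnegrE real_exprn_even_ge0.
Qed.

Lemma projector_gap_le n (psi phi : 'rV[C]_n) (P : 'M[C]_n) :
  dotmx psi psi = 1 -> dotmx phi phi = 1 -> P^t* = P -> P *m P = P ->
  dotmx (psi *m P) psi - dotmx (phi *m P) phi <= sqrtC (1 - `|dotmx psi phi| ^+ 2).
Proof.
move=> psi1 phi1 Ph PP; set Q := 1%:M - P.
have Qh : Q^t* = Q by rewrite /Q linearB /= map_mxB trmx1 map_mx1 Ph.
have QQ : Q *m Q = Q by rewrite /Q mulmxBl !mulmxBr !mul1mx !mulmx1 PP subrr subr0.
have proj_dot (X : 'M[C]_n) u w : X^t* = X -> X *m X = X ->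
    dotmx (u *m X) (w *m X) = dotmx (u *m X) w.
  by move=> Xh XX; rewrite !dotmxE trmxC_mul Xh !mulmxA -(mulmxA u) XX.
have split_dot u w : dotmx u w = dotmx (u *m P) (w *m P) + dotmx (u *m Q) (w *m Q).
  by rewrite !proj_dot // !dotmxE /Q mulmxBr mulmx1 mulmxBl !mxE [RHS]addrC subrK.
have unit_split u : dotmx u u = 1 -> dotmx (u *m P) (u *m P) = dotmx (u *m P) u
    /\ dotmx (u *m Q) (u *m Q) = 1 - dotmx (u *m P) u.
  move=> u1; rewrite -u1 (split_dot u u) !proj_dot //.
  by split => //; rewrite addrAC subrr add0r.
have [psiP psiQ] := unit_split _ psi1; have [phiP phiQ] := unit_split _ phi1.
apply: gap_le_sqrt_infidelity; rewrite ?normr_ge0 //.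
- by apply/andP; split; [rewrite -psiP dotmx_ge0 | rewrite -subr_ge0 -psiQ dotmx_ge0].
- by apply/andP; split; [rewrite -phiP dotmx_ge0 | rewrite -subr_ge0 -phiQ dotmx_ge0].
rewrite split_dot; apply: le_trans (ler_normD _ _) _.
by rewrite -psiQ -phiQ -psiP -phiP lerD // dotmx_CauchySchwarz.
Qed.

Lemma trnorm_conj_sub_le n (V rho : 'M[C]_n) (mu : C) :
  V \is unitarymx -> is_state rho ->
  (forall psi : 'rV[C]_n, dotmx psi psi = 1 -> mu <= `|dotmx (psi *m V) psi| ^+ 2) ->
  trnorm (rho - V *m rho *m V^t*) <= 2 * sqrtC (1 - mu).
Proof.
move=> Vu rho_state mu_le; have [rho_h _ _] := rho_state; rewrite /adj in rho_h.
have [R [p [Ru p_ge0 p1 tr_rho]]] := state_ensemble rho_state.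
have Yh := hermitian_sub_conj V rho_h.
have Ytr : \tr (rho - V *m rho *m V^t*) = 0.
  by rewrite linearB /= mxtrace_mulC mulmxA unitary_trmxC_mul // mul1mx subrr.
have [P [Ph PP ->]] := trnorm_traceless_hermitian Yh Ytr.
rewrite ler_pM2l // mulmxBl linearB /=.
have -> : \tr (V *m rho *m V^t* *m P) = \tr (rho *m (V^t* *m P *m V)).
  by rewrite -!mulmxA mxtrace_mulC !mulmxA.
rewrite !tr_rho -sumrB.
apply: (@le_trans _ _ (\sum_i p 0 i * sqrtC (1 - mu))); last by rewrite -mulr_suml p1 mul1r.
apply: ler_sum => i _; rewrite -mulrBr ler_wpM2l //.
set psi := row i R; have psi1 : dotmx psi psi = 1 by rewrite (row_unitarymxP Ru) eqxx.
set phi := psi *m V^t*.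
have phi1 : dotmx phi phi = 1 by rewrite dotmx_mulmx_unitary // trmxC_unitary.
have -> : dotmx (psi *m (V^t* *m P *m V)) psi = dotmx (phi *m P) phi.
  by rewrite !dotmxE trmxC_mul trmxCK !mulmxA.
apply: le_trans (projector_gap_le psi1 phi1 Ph PP) _.
have fid : dotmx psi phi = dotmx (psi *m V) psi.
  by rewrite !dotmxE trmxC_mul trmxCK mulmxA.
have infid_ge0 : 0 <= 1 - `|dotmx psi phi| ^+ 2 by rewrite subr_ge0 dotmx_unit_le1.
have mu_le_fid : mu <= `|dotmx psi phi| ^+ 2 by rewrite fid mu_le.
rewrite ler_sqrtC ?nnegrE ?lerD2l ?lerN2 //.
by apply: le_trans infid_ge0 _; rewrite lerD2l lerN2.
Qed.

Lemma sum_norm_of_cubic n (y : 'I_n -> C) (lam : C) :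
  0 <= lam -> (forall i, y i \is Num.real) -> (forall i, y i ^+ 3 = lam * y i) ->
  \sum_i y i ^+ 2 = 2 * lam -> \sum_i `|y i| = 2 * sqrtC lam.
Proof.
move=> lam_ge0 y_real y3 y2.
have norm_sqrt i : `|y i| * sqrtC lam = y i ^+ 2.
  have /eqP := y3 i; rewrite -subr_eq0 (_ : _ - _ = y i * (y i ^+ 2 - lam)); last by ring.
  rewrite mulf_eq0 subr_eq0 => /orP[/eqP->|/eqP <-]; first by rewrite normr0 mul0r expr0n.
  by rewrite -real_normK // sqrCK ?normr_ge0 // -expr2.
have [lam0|lam_neq0] := eqVneq lam 0.
  rewrite lam0 sqrtC0 mulr0; apply: big1 => i _; apply/eqP.
  by have := norm_sqrt i; rewrite lam0 sqrtC0 mulr0 => /esym/eqP; rewrite expf_eq0 -normr_eq0.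
have sqrt_neq0 : sqrtC lam != 0 by rewrite sqrtC_eq0.
apply: (mulIf sqrt_neq0); rewrite mulr_suml (eq_bigr _ (fun i _ => norm_sqrt i)) y2.
by rewrite -mulrA -expr2 sqrtCK.
Qed.

Lemma trnorm_outer_sub n (psi phi : 'rV[C]_n) : dotmx psi psi = 1 -> dotmx phi phi = 1 ->
  trnorm (outer psi psi - outer phi phi) = 2 * sqrtC (1 - `|dotmx psi phi| ^+ 2).
Proof.
move=> psi1 phi1; set Y := _ - _; set a := dotmx psi phi; set lam := 1 - _.
have a_conj : dotmx phi psi = a^* by rewrite dotmx_conj.
have Yh : Y^t* = Y by rewrite /Y trmxCB /outer !trmxC_mul !trmxCK.
have Y3 : Y *m Y *m Y = lam *: Y.
  have outer_mulZ c (u v w z : 'rV[C]_n) :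
      (c *: outer u v) *m outer w z = (c * dotmx v w) *: outer u z.
    by rewrite -scalemxAl outer_mul scalerA.
  rewrite /Y !(mulmxBl, mulmxBr, outer_mul, outer_mulZ) psi1 phi1 a_conj -/a.
  apply/matrixP => i j; rewrite !mxE !big_ord1 !mxE /lam normCK; ring.
have trY2 : \tr (Y *m Y) = 2 * lam.
  rewrite /Y !(mulmxBl, mulmxBr, outer_mul) !linearB !linearZ /= !mxtrace_outer.
  by rewrite psi1 phi1 a_conj -/a /lam normCK; ring.
have lam_ge0 : 0 <= lam by rewrite subr_ge0 dotmx_unit_le1.
have [W [y [Wu y_real eY]]] := hermitian_decomposition Yh.
have D3 : diag_mx y *m diag_mx y *m diag_mx y = lam *: diag_mx y.
  rewrite -[LHS](conj_unitaryK _ Wu) -!mulmx_conj_unitary // -eY Y3.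
  by rewrite -scalemxAr -scalemxAl eY conj_unitaryK.
rewrite eY trnorm_unitary_diag //; apply: sum_norm_of_cubic => // [i|].
  have := congr1 (fun M : 'M[C]_n => M i i) D3; rewrite /= !mulmx_diag !mxE eqxx !mulr1n => <-.
  by rewrite exprSr expr2.
rewrite -trY2 eY mulmx_conj_unitary // mxtrace_conj_unitary // mulmx_diag mxtrace_diag.
by apply: eq_bigr => i _; rewrite mxE.
Qed.

End Distinguishability.

Section Ancilla.
Variables (C : numClosedFieldType) (d d' : nat).

Lemma enc_dec (a : 'I_(d * d')) : enc (dec a).1 (dec a).2 = a.
Proof. by rewrite /enc /dec -surjective_pairing enum_valK cast_ordKV. Qed.

Lemma dec_enc i k : dec (enc i k : 'I_(d * d')) = (i, k).
Proof. by rewrite /enc /dec cast_ordK enum_rankK. Qed.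

Lemma sum_enc (F : 'I_(d * d') -> C) : \sum_a F a = \sum_i \sum_k F (enc i k).
Proof.
rewrite pair_big /= (reindex (fun p : 'I_d * 'I_d' => enc p.1 p.2)) /=.
  by apply: eq_bigr => -[i k].
by exists (@dec d d') => [p _|a _]; rewrite ?dec_enc -?surjective_pairing ?enc_dec.
Qed.

(* The matrix of A (x) id on C^d (x) C^d' in the basis indexed by enc. *)
Definition kron1 (A : 'M[C]_d) : 'M[C]_(d * d') :=
  \matrix_(a, b) (A (dec a).1 (dec b).1 * ((dec a).2 == (dec b).2)%:R).

Lemma sum_kron1_mull (A : 'M[C]_d) a (F : 'I_(d * d') -> C) :
  \sum_b kron1 A a b * F b = \sum_j A (dec a).1 j * F (enc j (dec a).2).
Proof.
rewrite sum_enc; apply: eq_bigr => j _; rewrite (bigD1 (dec a).2) //= big1 ?addr0.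
  by rewrite mxE dec_enc eqxx mulr1.
by move=> k k_neq; rewrite mxE dec_enc /= eq_sym (negPf k_neq) mulr0 mul0r.
Qed.

Lemma sum_kron1_mulr (A : 'M[C]_d) b (F : 'I_(d * d') -> C) :
  \sum_a F a * kron1 A a b = \sum_i F (enc i (dec b).2) * A i (dec b).1.
Proof.
rewrite sum_enc; apply: eq_bigr => i _; rewrite (bigD1 (dec b).2) //= big1 ?addr0.
  by rewrite mxE dec_enc eqxx mulr1.
by move=> k k_neq; rewrite mxE dec_enc /= (negPf k_neq) mulr0 mulr0.
Qed.

Lemma kron1_mul (A B : 'M[C]_d) : kron1 A *m kron1 B = kron1 (A *m B).
Proof.
apply/matrixP => a b; rewrite [LHS]mxE sum_kron1_mull [RHS]mxE mxE mulr_suml.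
by apply: eq_bigr => j _; rewrite mxE dec_enc mulrA.
Qed.

Lemma kron1_trmxC (A : 'M[C]_d) : (kron1 A)^t* = kron1 (A^t*).
Proof. by apply/matrixP => a b; rewrite !mxE rmorphM rmorph_nat (eq_sym (dec b).2). Qed.

Lemma kron1_1 : kron1 1%:M = 1%:M.
Proof.
have dec_inj : injective (@dec d d') by move=> x y e; rewrite -(enc_dec x) e enc_dec.
apply/matrixP => a b; rewrite !mxE -(inj_eq dec_inj).
by case: (dec a) (dec b) => [i k] [j l]; rewrite xpair_eqE -natrM mulnb.
Qed.

Lemma kron1_unitary (U : 'M[C]_d) : U \is unitarymx -> kron1 U \is unitarymx.
Proof.
by move=> /unitarymxP Uu; apply/unitarymxP; rewrite kron1_trmxC kron1_mul Uu kron1_1.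
Qed.

Lemma tens_id_conj (A B : 'M[C]_d) (X : 'M[C]_(d * d')) :
  tens_id (fun M => A *m M *m B) X = kron1 A *m X *m kron1 B.
Proof.
apply/matrixP => a b; rewrite [LHS]mxE [RHS]mxE sum_kron1_mulr mxE.
apply: eq_bigr => j _; rewrite [in RHS]mxE sum_kron1_mull mxE.
by congr (_ * _); apply: eq_bigr => i _; rewrite mxE.
Qed.

Lemma tens_id_Jch (U : 'M[C]_d) r (X : 'M[C]_(d * d')) :
  tens_id (Jch U r) X = r *: X + (1 - r) *: (kron1 U *m X *m (kron1 U)^t*).
Proof.
rewrite kron1_trmxC -tens_id_conj; apply/matrixP => a b; rewrite !mxE.
by rewrite !enc_dec.
Qed.

Definition slice (Psi : 'rV[C]_(d * d')) (k : 'I_d') : 'rV[C]_d := \row_i Psi 0 (enc i k).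

Lemma dotmx_kron1 (A : 'M[C]_d) (Psi : 'rV[C]_(d * d')) :
  dotmx (Psi *m kron1 A) Psi = \sum_k dotmx (slice Psi k *m A) (slice Psi k).
Proof.
rewrite dotmxE mxE sum_enc exchange_big /=; apply: eq_bigr => k _.
rewrite dotmxE mxE; apply: eq_bigr => j _.
rewrite [X in X * _]mxE sum_kron1_mulr dec_enc !mxE.
by congr (_ * _); apply: eq_bigr => i _; rewrite mxE.
Qed.

Lemma dotmx_slice (Psi : 'rV[C]_(d * d')) :
  \sum_k dotmx (slice Psi k) (slice Psi k) = dotmx Psi Psi.
Proof.
have := dotmx_kron1 1%:M Psi; rewrite kron1_1 mulmx1 => ->.
by apply: eq_bigr => k _; rewrite mulmx1.
Qed.

End Ancilla.

Section Discrimination.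
Variable C : numClosedFieldType.

Lemma mix_sub n (X M : 'M[C]_n) (r1 r2 : C) :
  (r1 *: X + (1 - r1) *: M) - (r2 *: X + (1 - r2) *: M) = (r1 - r2) *: (X - M).
Proof. by apply/matrixP => i j; rewrite !mxE; ring. Qed.

Lemma trnorm_mix_sub n (V rho : 'M[C]_n) (r1 r2 : C) : rho^t* = rho ->
  trnorm ((r1 *: rho + (1 - r1) *: (V *m rho *m V^t*))
          - (r2 *: rho + (1 - r2) *: (V *m rho *m V^t*)))
  = `|r1 - r2| * trnorm (rho - V *m rho *m V^t*).
Proof.
by move=> rho_h; rewrite mix_sub trnormZ_normal // hermitian_normal // hermitian_sub_conj.
Qed.

Lemma psucc_single_Jch d (U rho : 'M[C]_d) (r1 r2 : C) : rho^t* = rho ->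
  psucc_single (Jch U r1) (Jch U r2) rho
  = 2^-1 + 4^-1 * (`|r1 - r2| * trnorm (rho - U *m rho *m U^t*)).
Proof. by move=> rho_h; rewrite /psucc_single /Jch /adj trnorm_mix_sub. Qed.

Lemma psucc_ent_Jch d d' (U : 'M[C]_d) (rho : 'M[C]_(d * d')) (r1 r2 : C) : rho^t* = rho ->
  psucc_ent (Jch U r1) (Jch U r2) rho
  = 2^-1 + 4^-1 * (`|r1 - r2| * trnorm (rho - kron1 d' U *m rho *m (kron1 d' U)^t*)).
Proof. by move=> rho_h; rewrite /psucc_ent !tens_id_Jch trnorm_mix_sub. Qed.

End Discrimination.

Theorem theorem4 (C : numClosedFieldType) (d : nat) (U : 'M[C]_d) (r1 r2 : C) :
  (2 <= d)%N -> U \is unitarymx ->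
  0 <= r1 <= 1 -> 0 <= r2 <= 1 ->
  exists rho0 : 'M[C]_d,
    [/\ is_state rho0,
        (forall rho : 'M[C]_d, is_state rho ->
           psucc_single (Jch U r1) (Jch U r2) rho
             <= psucc_single (Jch U r1) (Jch U r2) rho0)
      & (forall (d' : nat) (rhoAB : 'M[C]_(d * d')), is_state rhoAB ->
           psucc_ent (Jch U r1) (Jch U r2) rhoAB
             <= psucc_single (Jch U r1) (Jch U r2) rho0)].
Proof.
move=> d_ge2 Uu _ _.
have [psi0 [psi0_1 psi0_min]] := exists_min_numerical_range (ltnW d_ge2) (unitary_normal Uu).
set mu := `|dotmx (psi0 *m U) psi0| ^+ 2 in psi0_min.
have [rho0_h _ _] := outer_state psi0_1.
have psucc_le n (V rho : 'M[C]_n) : V \is unitarymx -> is_state rho ->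
    (forall psi, dotmx psi psi = 1 -> mu <= `|dotmx (psi *m V) psi| ^+ 2) ->
    2^-1 + 4^-1 * (`|r1 - r2| * trnorm (rho - V *m rho *m V^t*))
    <= psucc_single (Jch U r1) (Jch U r2) (outer psi0 psi0).
  move=> Vu rho_state mu_le.
  rewrite psucc_single_Jch // outer_conj trnorm_outer_sub ?dotmx_trmxC ?mulmxKtV //.
  by rewrite lerD2l !ler_wpM2l ?invr_ge0 ?ler0n ?normr_ge0 // trnorm_conj_sub_le.
exists (outer psi0 psi0); split; first exact: outer_state.
  move=> rho rho_state; have [rho_h _ _] := rho_state.
  rewrite psucc_single_Jch //; apply: psucc_le => // psi psi1.
  by have := psi0_min _ (fun _ : 'I_1 => psi); rewrite !big_ord1; apply.
move=> d' rhoAB rho_state; have [rho_h _ _] := rho_state.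
rewrite psucc_ent_Jch //; apply: psucc_le (kron1_unitary _ Uu) rho_state _ => Psi Psi1.
by rewrite dotmx_kron1; apply: psi0_min; rewrite dotmx_slice.
Qed.
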